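(* Let $\mathcal{N}=\{1,\dots,N\}$ be a finite set of players and let $v:2^{\mathcal{N}}\to\mathbb{R}$ be any real-valued set function (the coalition value, with $v(\emptyset)=0$). For a coalition $\mathcal{S}\subseteq\mathcal{N}$ and a player $i\in\mathcal{S}$, let the payoff $x_i(\mathcal{S})$ be the Shapley value of $i$ in the game $v$ restricted to $\mathcal{S}$: $$x_i(\mathcal{S})=\sum_{\mathcal{T}\subseteq \mathcal{S}\setminus\{i\}}\frac{|\mathcal{T}|!\,(|\mathcal{S}|-|\mathcal{T}|-1)!}{|\mathcal{S}|!}\bigl(v(\mathcal{T}\cup\{i\})-v(\mathcal{T})\bigr).$$ Consider the hedonic shift process with histories defined in the context below, started from an arbitrary initial partition $\Pi_0$ of $\mathcal{N}$ with all histories empty. Then every sequence of moves of this process is finite; i.e., the process always reaches, after finitely many moves, a final partition $\Pi_f$ at which no player has an admissible move.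
   Context: A coalition partition of $\mathcal{N}$ is a set $\Pi=\{\mathcal{S}_1,\dots,\mathcal{S}_l\}$ of nonempty pairwise disjoint subsets of $\mathcal{N}$ whose union is $\mathcal{N}$; $\mathcal{S}_\Pi(i)$ denotes the member of $\Pi$ containing $i$. Hedonic shift process with histories: the state is a pair $(\Pi,(h(i))_{i\in\mathcal{N}})$ where $\Pi$ is a coalition partition and each history $h(i)$ is a set of subsets of $\mathcal{N}\setminus\{i\}$; initially every $h(i)=\emptyset$. A move is performed by a single player $i$ as follows. Let $\mathcal{S}_{\mathrm{cur}}=\mathcal{S}_\Pi(i)$. The eligible targets are the sets $\mathcal{T}\in(\Pi\setminus\{\mathcal{S}_{\mathrm{cur}}\})\cup\{\emptyset\}$ with $\mathcal{T}\notin h(i)$. Player $i$ has an admissible move if some eligible $\mathcal{T}$ satisfies $x_i(\mathcal{T}\cup\{i\})>x_i(\mathcal{S}_{\mathrm{cur}})$; in that case $i$ chooses an eligible $\mathcal{T}$ maximizing $x_i(\mathcal{T}\cup\{i\})$ (ties broken arbitrarily), the partition becomes $(\Pi\setminus\{\mathcal{S}_{\mathrm{cur}},\mathcal{T}\})\cup\{\mathcal{S}_{\mathrm{cur}}\setminus\{i\},\mathcal{T}\cup\{i\}\}$ (with the empty set discarded if $\mathcal{S}_{\mathrm{cur}}\setminus\{i\}=\emptyset$), and $h(i)$ is replaced by $h(i)\cup\{\mathcal{S}_{\mathrm{cur}}\setminus\{i\}\}$; all other histories are unchanged. Moves may be performed by players in any order (asynchronously), one at a time. *)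

From HB Require Import structures.
From mathcomp Require Import all_boot all_order all_algebra.
Set Implicit Arguments. Unset Strict Implicit. Unset Printing Implicit Defensive.
Import Order.TTheory GRing.Theory Num.Theory.
Local Open Scope ring_scope.

Definition shapley (R : realFieldType) (N : nat) (v : {set 'I_N} -> R)
    (i : 'I_N) (S : {set 'I_N}) : R :=
  \sum_(T in powerset (S :\ i))
     (((#|T|)`! * (#|S| - #|T| - 1)`!)%N%:R / ((#|S|)`!)%:R) * (v (i |: T) - v T).

Definition hstate (N : nat) : Type :=
  ({set {set 'I_N}} * ('I_N -> {set {set 'I_N}}))%type.

Definition init_state (N : nat) (P0 : {set {set 'I_N}}) : hstate N :=
  (P0, fun _ => set0).

Definition eligible (N : nat) (s : hstate N) (i : 'I_N) (T : {set 'I_N}) : Prop :=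
  (T \in s.1 :\ pblock s.1 i \/ T = set0) /\ T \notin s.2 i.

Definition hmove (R : realFieldType) (N : nat) (v : {set 'I_N} -> R)
    (i : 'I_N) (s s' : hstate N) : Prop :=
  let P := s.1 in let h := s.2 in
  let Scur := pblock P i in
  exists T : {set 'I_N},
    [/\ eligible s i T,
        shapley v i Scur < shapley v i (i |: T),
        (forall T', eligible s i T' -> shapley v i (i |: T') <= shapley v i (i |: T)),
        s'.1 = ((P :\ Scur :\ T) :|: [set Scur :\ i; i |: T]) :\ set0 &
        (forall j, s'.2 j = if j == i then h i :|: [set Scur :\ i] else h j)].

Definition hstep (R : realFieldType) (N : nat) (v : {set 'I_N} -> R)
    (s s' : hstate N) : Prop :=
  exists i, hmove v i s s'.

From HB Require Import structures.
From mathcomp Require Import all_boot all_order all_algebra.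
From mathcomp Require Import ring lra zify.
Import Order.TTheory GRing.Theory Num.Theory.
Local Open Scope ring_scope.
Set Implicit Arguments. Unset Strict Implicit.

(* The Shapley value is the marginal contribution of the Hart--Mas-Colell
   potential p: x_i(S) = p(S) - p(S \ {i}).  A move of i from S to T u {i}
   changes only these two blocks, so its gain x_i(T u {i}) - x_i(S) is exactly
   the increase of the potential sum_(B in Pi) p(B) of the partition.  This
   quantity therefore increases strictly along any run, whatever the
   histories, while there are only finitely many partitions of N. *)

Section AddBlock.
Variables (T : finType) (V : nmodType) (F : {set T} -> V).

Lemma big_setD1_set0 (A : {set {set T}}) :
  F set0 = 0 -> \sum_(X in A :\ set0) F X = \sum_(X in A) F X.
Proof.
move=> F0; case: (boolP (set0 \in A)) => [A0|nA0].
  by rewrite [RHS](big_setD1 set0 A0) /= F0 add0r.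
by apply: eq_bigl => X; rewrite !inE; case: eqP => // ->; rewrite (negbTE nA0).
Qed.

Lemma partitionU1_set0 (P : {set {set T}}) (D A : {set T}) :
  partition P D -> [disjoint A & D] -> partition ((A |: P) :\ set0) (A :|: D).
Proof.
move=> partP disAD; have [->|A0] := eqVneq A set0.
  have -> : (set0 |: P) :\ set0 = P.
    apply/setP => X; rewrite !inE; case: eqP => [->|//].
    by rewrite (partition0 partP).
  by rewrite set0U.
have -> : (A |: P) :\ set0 = A |: P.
  apply/setP => X; rewrite !inE; case: eqP => [->|//].
  by rewrite eq_sym (negbTE A0) (partition0 partP).
exact: partitionU1.
Qed.

Lemma big_partitionU1_set0 (P : {set {set T}}) (D A : {set T}) :
  F set0 = 0 -> partition P D -> [disjoint A & D] ->
  \sum_(X in (A |: P) :\ set0) F X = F A + \sum_(X in P) F X.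
Proof.
move=> F0 partP disAD; rewrite big_setD1_set0 // big_setU1 //.
have [->|/set0Pn[a aA]] := eqVneq A set0; first by rewrite (partition0 partP).
apply/negP => AP; have /negP := disjointFr disAD aA; apply.
by rewrite -(cover_partition partP); apply/bigcupP; exists A.
Qed.

End AddBlock.

Definition shift_block (T : finType) (P : {set {set T}}) (i : T) (B : {set T}) :=
  ((P :\ pblock P i :\ B) :|: [set pblock P i :\ i; i |: B]) :\ set0.

Section ShiftBlock.
Variables (T : finType) (P : {set {set T}}) (D : {set T}) (i : T) (B : {set T}).
Hypotheses (partP : partition P D) (iD : i \in D)
  (targetB : B \in P :\ pblock P i \/ B = set0).

Let S := pblock P i.
Let Q := P :\ S :\ B.
Let D0 := D :\: S :\: B.

Lemma pblock_mem_partition : S \in P.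
Proof. by apply: pblock_mem; rewrite (cover_partition partP). Qed.

Lemma mem_pblock_partition : i \in S.
Proof. by rewrite mem_pblock (cover_partition partP). Qed.

Lemma disjoint_pblock_target : [disjoint S & B].
Proof.
case: targetB => [|->]; last by rewrite disjoints_subset setC0 subsetT.
rewrite !inE => /andP[BS BP].
have := partition_trivIset partP => /trivIsetP; apply => //.
  exact: pblock_mem_partition.
by rewrite eq_sym.
Qed.

Lemma notin_target : i \notin B.
Proof. by rewrite (disjointFr disjoint_pblock_target mem_pblock_partition). Qed.

Lemma partition_shift_rest : partition Q D0.
Proof.
rewrite /Q /D0; have partPS := partitionD1 partP pblock_mem_partition.
case: targetB => [BPS|->]; first exact: partitionD1.
suff /setDidPl -> : [disjoint P :\ S & [set set0]] by rewrite setD0.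
by rewrite disjoint_sym disjoints1 !inE (partition0 partP) andbF.
Qed.

Lemma shift_blockE :
  shift_block P i B = ((S :\ i) |: (((i |: B) |: Q) :\ set0)) :\ set0.
Proof.
apply/setP => X; rewrite /shift_block !(in_setD1, in_setU, in_setU1, in_set2).
by case: (X != set0); case: [&& _, _ & _];
  case: (X \in [set S :\ i]); case: (X \in [set i |: B]).
Qed.

Lemma disjoint_target_rest : [disjoint i |: B & D0].
Proof.
apply/pred0P => x /=; rewrite !inE.
by case: eqP => [->|_]; rewrite ?mem_pblock_partition ?andbF //=; case: (x \in B).
Qed.

Lemma disjoint_source_rest : [disjoint S :\ i & (i |: B) :|: D0].
Proof.
apply/pred0P => x /=; rewrite !inE.
case: (boolP (x \in S)) => [xS|]; last by rewrite andbF.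
by rewrite (disjointFr disjoint_pblock_target xS); case: eqP.
Qed.

Lemma cover_shift_block : (S :\ i) :|: ((i |: B) :|: D0) = D.
Proof.
have SD : S \subset D := partitionS partP pblock_mem_partition.
have BD : B \subset D.
  case: targetB => [|->]; last exact: sub0set.
  by rewrite inE => /andP[_]; exact: partitionS.
apply/setP => x; rewrite !inE.
case: eqP => [->|_]; first by rewrite iD orbT.
case: (boolP (x \in S)) => [/(subsetP SD)->//|_].
by case: (boolP (x \in B)) => [/(subsetP BD)->|]; rewrite ?orbT ?orbF.
Qed.

Lemma partition_shift_block : partition (shift_block P i B) D.
Proof.
rewrite shift_blockE -cover_shift_block.
apply: partitionU1_set0 disjoint_source_rest.
exact: partitionU1_set0 partition_shift_rest disjoint_target_rest.
Qed.

Lemma big_shift_block (V : nmodType) (F : {set T} -> V) : F set0 = 0 ->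
  \sum_(X in shift_block P i B) F X + F S + F B =
  \sum_(X in P) F X + F (S :\ i) + F (i |: B).
Proof.
move=> F0; have partQ1 := partitionU1_set0 partition_shift_rest disjoint_target_rest.
rewrite shift_blockE (big_partitionU1_set0 F0 partQ1 disjoint_source_rest).
rewrite (big_partitionU1_set0 F0 partition_shift_rest disjoint_target_rest).
have -> : \sum_(X in P) F X = F S + F B + \sum_(X in Q) F X.
  rewrite (big_setD1 S pblock_mem_partition) -addrA; congr (_ + _).
  case: targetB => [BPS|B0]; first exact: big_setD1.
  by rewrite /Q B0 F0 add0r big_setD1_set0.
by rewrite addrA [LHS](ACl (4*5*3*1*2)).
Qed.

End ShiftBlock.

Lemma big_powersetD1 (T : finType) (V : nmodType) (F : {set T} -> V)
    (S : {set T}) (i : T) :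
  i \in S ->
  \sum_(X in powerset S) F X = \sum_(U in powerset (S :\ i)) (F (i |: U) + F U).
Proof.
move=> iS; rewrite (bigID (fun X : {set T} => i \in X)) big_split /=; congr (_ + _).
  rewrite (reindex_onto (fun U => i |: U) (fun X => X :\ i)) /=; last first.
    by move=> X /andP[_ iX]; exact: setD1K.
  apply: eq_bigl => U; rewrite !powersetE setU11 andbT subsetD1.
  case iU: (i \in U).
    rewrite andbF; apply/negbTE; apply: contraTN iU => /andP[_ /eqP <-].
    by rewrite setD11.
  by rewrite setU1K ?iU // eqxx subUset sub1set iS.
by apply: eq_bigl => X; rewrite !powersetE subsetD1.
Qed.

Section ShapleyPotential.
Variables (R : realFieldType) (N : nat) (v : {set 'I_N} -> R).
Hypothesis v0 : v set0 = 0.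

Definition potential_coef (t s : nat) : R := ((t.-1)`! * (s - t)`!)%N%:R / (s`!)%:R.

(* The Hart--Mas-Colell potential; its [T = set0] term vanishes since [v set0 = 0]. *)
Definition potential (S : {set 'I_N}) : R :=
  \sum_(T in powerset S) potential_coef #|T| #|S| * v T.

Lemma potential_coefS u n :
  potential_coef u.+1 n.+1 = ((u`! * (n.+1 - u - 1)`!)%N%:R / ((n.+1)`!)%:R).
Proof. by rewrite /potential_coef /= subnS subn1. Qed.

Lemma potential_coef_rec u n : (0 < u <= n)%N ->
  potential_coef u n = potential_coef u n.+1 + potential_coef u.+1 n.+1.
Proof.
case: u => [//|k] /andP[_ le_kn].
have [m ->] : exists m, n = (k.+1 + m)%N by exists (n - k.+1)%N; lia.
rewrite /potential_coef [k.+1.-1]/= [k.+2.-1]/=.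
have -> : (k.+1 + m - k.+1 = m)%N by lia.
have -> : ((k.+1 + m).+1 - k.+1 = m.+1)%N by lia.
have -> : ((k.+1 + m).+1 - k.+2 = m)%N by lia.
set s := (k.+1 + m)%N; have sE : s%:R = k.+1%:R + m%:R :> R by rewrite natrD.
have nzF : s`!%:R != 0 :> R by rewrite pnatr_eq0 -lt0n fact_gt0.
clearbody s; rewrite (factS s) (factS m) (factS k) !natrM.
rewrite [s.+1%:R]mulrSr sE; field; rewrite nzF /=; apply: lt0r_neq0.
have := ler0n R k; have := ler0n R m; lra.
Qed.

Lemma shapley_potential i (S : {set 'I_N}) :
  i \in S -> shapley v i S = potential S - potential (S :\ i).
Proof.
move=> iS; have cardS : #|S| = #|S :\ i|.+1 by rewrite (cardsD1 i S) iS.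
rewrite /potential (big_powersetD1 _ iS) /shapley -sumrB; apply: eq_bigr => U.
rewrite powersetE => sub_U.
have iU : i \notin U by apply: contraTN sub_U => iU; rewrite subsetD1 iU andbF.
rewrite cardsU1 iU add1n cardS.
have [/cards0_eq->|U0] := posnP #|U|; first by rewrite v0 cards0 potential_coefS; ring.
rewrite (@potential_coef_rec #|U| #|S :\ i|) ?U0 ?subset_leq_card //.
by rewrite potential_coefS; ring.
Qed.

Lemma potential0 : potential set0 = 0.
Proof. by rewrite /potential powerset0 big_set1 v0 mulr0. Qed.

Definition partition_potential (P : {set {set 'I_N}}) : R := \sum_(B in P) potential B.

Lemma hmove_partition_potential i (s s' : hstate N) :
  partition s.1 [set: 'I_N] -> hmove v i s s' ->
  partition s'.1 [set: 'I_N] /\ partition_potential s.1 < partition_potential s'.1.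
Proof.
case: s => [P h] /= partP [B [[targetB _] better _ -> _]].
have iD := in_setT i; rewrite -/(shift_block P i B).
split; first exact: partition_shift_block.
have := big_shift_block partP iD targetB potential0.
move: better; rewrite (shapley_potential (mem_pblock_partition partP iD)).
rewrite (shapley_potential (setU11 i B)) (setU1K (notin_target partP iD targetB)).
rewrite /partition_potential; lra.
Qed.

End ShapleyPotential.

Lemma no_increasing_chain (X : finType) (d : Order.disp_t) (T : porderType d)
    (g : X -> T) (f : nat -> X) :
  ~ (forall n, (g (f n) < g (f n.+1))%O).
Proof.
move=> incr; have mono := Order.NatMonotonyTheory.homo_ltn_lt incr.
have inj_f : injective (fun k : 'I_#|X|.+1 => f k).
  move=> m n /= fmn; apply: val_inj => /=.
  by case: (ltngtP m n) => // lt_mn; have := mono _ _ lt_mn; rewrite /= fmn ltxx.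
by have := leq_card _ inj_f; rewrite card_ord ltnn.
Qed.

Theorem proposition1 (R : realFieldType) (N : nat) (v : {set 'I_N} -> R)
    (P0 : {set {set 'I_N}}) :
  v set0 = 0 ->
  partition P0 [set: 'I_N] ->
  ~ (exists f : nat -> hstate N,
        f 0%N = init_state P0 /\ forall n, hstep v (f n) (f n.+1)).
Proof.
move=> v0 partP0 [f [f0 step_f]].
have partf n : partition (f n).1 [set: 'I_N].
  elim: n => [|n IHn]; first by rewrite f0.
  by have [i /(hmove_partition_potential v0 IHn)[]] := step_f n.
apply: (@no_increasing_chain _ _ _ (partition_potential v) (fun n => (f n).1)) => n.
by have [i /(hmove_partition_potential v0 (partf n))[]] := step_f n.
Qed.
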